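(* Let $f\in\{0,1\}^n$ be tilde-non-isometric. Then either $f$ has a $1$-tilde-error overlap of type S, or $f$ has a $2$-tilde-error overlap.
   Context: Words are over $\{0,1\}$. For $w$ of length $n$: $w[i]$ is its $i$-th symbol, $\mathrm{pre}_l(w)=w[1..l]$ and $\mathrm{suf}_l(w)=w[n-l+1..n]$. A word is $f$-free if it does not contain $f$ as a factor. Operations: the replacement $R_i$ flips the symbol at position $i$. The swap $S_i$ is defined when $w[i]\ne w[i+1]$ and exchanges these two symbols. $\mathrm{dist}_\sim(u,v)$ is the minimum number of replacements and swaps transforming $u$ into the equal-length word $v$. A tilde-transformation from $u$ to $v$ is a sequence of words from $u$ to $v$, each obtained from the previous by one replacement or swap. It is minimal if it uses exactly $\mathrm{dist}_\sim(u,v)$ operations and each position is modified by at most one operation (a swap $S_i$ modifies positions $i,i+1$). A word $f$ of length $n$ is tilde-isometric if, for every $m>n$ and all $f$-free $u,v\in\{0,1\}^m$, there exists a minimal tilde-transformation from $u$ to $v$ all of whose words are $f$-free. Otherwise it is tilde-non-isometric. $f$ has a $q$-tilde-error overlap of length $l$, where $1\le l\le n-1$, if $\mathrm{dist}_\sim(\mathrm{pre}_l(f),\mathrm{suf}_l(f))=q$. A $1$-tilde-error overlap of length $l$ is of type S if $\mathrm{suf}_l(f)=S_i(\mathrm{pre}_l(f))$ for some $i$. *)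

From mathcomp Require Import all_boot.
Set Implicit Arguments. Unset Strict Implicit. Unset Printing Implicit Defensive.

(* Binary words: seq bool. Positions are 0-indexed here (paper: 1-indexed). *)
Definition word := seq bool.

Inductive op := R of nat | S of nat.

Definition op_valid (w : word) (o : op) : bool :=
  match o with
  | R i => i < size w
  | S i => (i.+1 < size w) && (nth false w i != nth false w i.+1)
  end.

Definition apply_op (w : word) (o : op) : word :=
  match o with
  | R i => set_nth false w i (~~ nth false w i)
  | S i => set_nth false (set_nth false w i (nth false w i.+1)) i.+1 (nth false w i)
  end.

Definition modified (o : op) : seq nat :=
  match o with R i => [:: i] | S i => [:: i; i.+1] end.

Fixpoint valid_seq (w : word) (os : seq op) : bool :=
  match os with
  | [::] => true
  | o :: os' => op_valid w o && valid_seq (apply_op w o) os'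
  end.

Fixpoint trace (w : word) (os : seq op) : seq word :=
  w :: match os with
       | [::] => [::]
       | o :: os' => trace (apply_op w o) os'
       end.

Definition transforms (u v : word) (os : seq op) : Prop :=
  valid_seq u os /\ foldl apply_op u os = v.

Definition dist_tilde (u v : word) (d : nat) : Prop :=
  (exists os, transforms u v os /\ size os = d) /\
  (forall os, transforms u v os -> d <= size os).

Definition minimal_trans (u v : word) (os : seq op) : Prop :=
  transforms u v os /\ dist_tilde u v (size os) /\
  uniq (flatten (map modified os)).

Definition free (f w : word) : bool := ~~ infix f w.

Definition pre (l : nat) (w : word) : word := take l w.
Definition suf (l : nat) (w : word) : word := drop (size w - l) w.

Definition tilde_isometric (f : word) : Prop :=
  forall m, size f < m -> forall u v : word,
    size u = m -> size v = m -> free f u -> free f v ->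
    exists os, minimal_trans u v os /\ all (free f) (trace u os).

Definition err_overlap (f : word) (q l : nat) : Prop :=
  1 <= l <= (size f).-1 /\ dist_tilde (pre l f) (suf l f) q.

Definition overlap_typeS (f : word) (l : nat) : Prop :=
  err_overlap f 1 l /\
  exists i, op_valid (pre l f) (S i) /\ suf l f = apply_op (pre l f) (S i).

From HB Require Import structures.
From mathcomp Require Import all_boot zify.
From Stdlib Require Import Classical.
Set Implicit Arguments. Unset Strict Implicit. Unset Printing Implicit Defensive.

(* We prove the contrapositive:
   if f has neither, then any two f-free words u, v of equal length are joined
   by a minimal tilde-transformation through f-free words.

   1. Applying a disjoint family of operations simultaneously (apply_all),
      and reordering such a family into a sequence (free_ordering): it
      suffices that one operation can always be applied first keeping the
      word f-free.
   2. The greedy distance: a lower bound on the length of any transformation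
      that is realised by a disjoint family (greedy_ops), which is therefore
      minimal.
   3. Factors and occurrences: restricting a transformation to a window, and
      overlap_of_occurrences, which turns two overlapping occurrences of f,
      created by two disjoint operations and hit by both, into a forbidden
      overlap.
   4. free_step: if every single operation of the family created f, a pair of
      neighbouring operations (switching_pair) produces such occurrences. *)

Definition op_eqb (o1 o2 : op) : bool :=
  match o1, o2 with R i, R j | S i, S j => i == j | _, _ => false end.

Lemma op_eqP : Equality.axiom op_eqb.
Proof. by case=> i [] j /=; try (by constructor); apply: (iffP eqP) => [->|[]]. Qed.

HB.instance Definition _ := hasDecEq.Build op op_eqP.

Definition op_pos (o : op) : nat := match o with R i | S i => i end.

Definition op_val (w : word) (o : op) (k : nat) : bool :=
  match o with
  | R i => ~~ nth false w i
  | S i => if k == i then nth false w i.+1 else nth false w i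
  end.

Lemma op_pos_modified (o : op) : op_pos o \in modified o.
Proof. by case: o => i; rewrite /= inE eqxx. Qed.

Lemma modified_bounds (o : op) (k : nat) :
  k \in modified o -> op_pos o <= k <= (op_pos o).+1.
Proof. by case: o => i; rewrite /= !inE; [move=> /eqP-> | case/orP=> /eqP->]; lia. Qed.

Lemma size_apply_op (w : word) (o : op) :
  op_valid w o -> size (apply_op w o) = size w.
Proof.
by case: o => i /=; [|case/andP]; move=> *; rewrite !size_set_nth; lia.
Qed.

Lemma nth_apply_op (w : word) (o : op) (k : nat) : op_valid w o ->
  nth false (apply_op w o) k =
  if k \in modified o then op_val w o k else nth false w k.
Proof.
case: o => i /= _; rewrite !inE !nth_set_nth /=; first by case: eqP.
case: (k =P i.+1) => [->|_]; first by rewrite orbT; case: eqP => //; lia.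
by rewrite orbF nth_set_nth /=; case: (k =P i).
Qed.

Lemma op_val_flips (w : word) (o : op) (k : nat) :
  op_valid w o -> k \in modified o -> op_val w o k != nth false w k.
Proof.
case: o => i /=; rewrite !inE; first by move=> _ /eqP->; case: nth.
case/andP=> _ Hne /orP[] /eqP->; first by rewrite eqxx eq_sym.
by rewrite ifN //; lia.
Qed.

Lemma op_valid_ext (w w' : word) (o : op) : size w = size w' ->
  (forall j, j \in modified o -> nth false w j = nth false w' j) ->
  op_valid w o = op_valid w' o.
Proof. by case: o => i /= -> Hw; rewrite // !Hw // !inE eqxx ?orbT. Qed.

Lemma op_valid_apply_self (w : word) (o : op) :
  op_valid w o -> op_valid (apply_op w o) o.
Proof.
case: o => i Vo.
  by change (i < size (apply_op w (R i))); rewrite size_apply_op.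
change ((i.+1 < size (apply_op w (S i))) &&
  (nth false (apply_op w (S i)) i != nth false (apply_op w (S i)) i.+1)).
rewrite size_apply_op // !nth_apply_op // !inE !eqxx ?orbT /=.
by case/andP: Vo => Hi Hne; rewrite Hi eqxx ifN 1?eq_sym //; apply/eqP; lia.
Qed.

Lemma apply_op_involutive (w : word) (o : op) :
  op_valid w o -> apply_op (apply_op w o) o = w.
Proof.
move=> Vo; have Vo' := op_valid_apply_self Vo.
apply: (@eq_from_nth _ false) => [|k _]; first by rewrite !size_apply_op.
rewrite (nth_apply_op _ Vo'); case: ifP => Hk; last by rewrite nth_apply_op // Hk.
case: o Vo {Vo'} Hk => i Vo Hk.
  change (~~ nth false (apply_op w (R i)) i = nth false w k).
  by rewrite nth_apply_op // inE eqxx /=; move: Hk; rewrite inE => /eqP->; rewrite negbK.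
change ((if k == i then nth false (apply_op w (S i)) i.+1
         else nth false (apply_op w (S i)) i) = nth false w k).
rewrite !nth_apply_op // !inE !eqxx /= ?orbT; move: Hk; rewrite !inE.
by case: (k =P i) => [->|_] /=; [rewrite ifN //; apply/eqP; lia | move=> /eqP->; rewrite eqxx].
Qed.

(* A list D of operations is applied simultaneously to w: position k gets the
   value written by the operation of D modifying k, if any.  This is meant for
   families whose modified positions are pairwise disjoint. *)
Definition positions (D : seq op) : seq nat := flatten (map modified D).

Definition disjoint_ops (w : word) (D : seq op) : bool :=
  uniq (positions D) && all (op_valid w) D.

Fixpoint apply_all (w : word) (D : seq op) (k : nat) : bool :=
  match D with
  | [::] => nth false w k
  | o :: D' => if k \in modified o then op_val w o k else apply_all w D' k
  end.

Lemma modified_disjoint (D : seq op) (o1 o2 : op) (k : nat) : uniq (positions D) ->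
  o1 \in D -> o2 \in D -> k \in modified o1 -> k \in modified o2 -> o1 = o2.
Proof.
elim: D => //= o D' IH; rewrite /positions /= cat_uniq => /and3P[_ Hd Hu].
have inD' o' : o' \in D' -> k \in modified o' -> k \in positions D'.
  by move=> O' K; apply/flatten_mapP; exists o'.
rewrite !inE => /orP[/eqP->|H1] /orP[/eqP->|H2] // K1 K2.
- by move: Hd => /hasPn/(_ k (inD' _ H2 K2)); rewrite K1.
- by move: Hd => /hasPn/(_ k (inD' _ H1 K1)); rewrite K2.
- exact: IH.
Qed.

Lemma op_pos_inj (D : seq op) (o1 o2 : op) : uniq (positions D) ->
  o1 \in D -> o2 \in D -> op_pos o1 = op_pos o2 -> o1 = o2.
Proof.
move=> U O1 O2 E; apply: (modified_disjoint U O1 O2 (op_pos_modified o1)).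
by rewrite E op_pos_modified.
Qed.

Lemma apply_all_in (w : word) (D : seq op) (o : op) (k : nat) : uniq (positions D) ->
  o \in D -> k \in modified o -> apply_all w D k = op_val w o k.
Proof.
elim: D => //= o' D' IH U; rewrite inE => /orP[/eqP<- ->//|H] K.
case: ifP => K'.
  by rewrite (@modified_disjoint (o' :: D') o' o k) // ?inE ?eqxx ?H ?orbT.
by apply: IH => //; move: U; rewrite /positions /= cat_uniq => /and3P[].
Qed.

Lemma apply_all_out (w : word) (D : seq op) (k : nat) :
  (forall o, o \in D -> k \notin modified o) -> apply_all w D k = nth false w k.
Proof.
elim: D => //= o D IH H; rewrite ifN ?H ?inE ?eqxx //; apply: IH => o' O'.
by apply: H; rewrite inE O' orbT.
Qed.

Lemma disjoint_head (o o' : op) (D : seq op) (k : nat) : uniq (positions (o :: D)) ->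
  o' \in D -> k \in modified o -> k \notin modified o'.
Proof.
rewrite /positions /= cat_uniq => /and3P[_ Hd _] O' K; apply/negP => K'.
have F : k \in positions D by apply/flatten_mapP; exists o'.
by move: Hd => /hasPn/(_ k F); rewrite K.
Qed.

Lemma apply_all_ext (w w' : word) (D : seq op) (k : nat) :
  (forall j, (j \in positions D) || (j == k) -> nth false w j = nth false w' j) ->
  apply_all w D k = apply_all w' D k.
Proof.
elim: D => [|o D IH] H /=; first by apply: H; rewrite eqxx orbT.
case: ifP => K.
  case: o K H => i K H /=; first by rewrite H // /positions /= inE eqxx.
  by rewrite !H // /positions /= !inE eqxx ?orbT.
apply: IH => j /orP[J|J]; apply: H; last by rewrite J orbT.
by rewrite /positions /= mem_cat J orbT.
Qed.

Lemma apply_all_cons (w : word) (o : op) (D : seq op) (k : nat) :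
  uniq (positions (o :: D)) -> op_valid w o ->
  apply_all (apply_op w o) D k = apply_all w (o :: D) k.
Proof.
move=> U V /=; case: ifP => K.
  by rewrite apply_all_out ?nth_apply_op ?K // => o' O'; exact: (disjoint_head U O' K).
apply: apply_all_ext => j /orP[J|/eqP->]; rewrite nth_apply_op // ?K //.
case: ifP => // J'; move/flatten_mapP: J => [o' O' J''].
by move: (disjoint_head U O' J'); rewrite J''.
Qed.

Lemma uniq_positions_perm (D D' : seq op) :
  perm_eq D D' -> uniq (positions D) = uniq (positions D').
Proof. by move=> P; apply: perm_uniq; apply: perm_flatten; apply: perm_map. Qed.

Lemma apply_all_perm (w : word) (D D' : seq op) (k : nat) : uniq (positions D) ->
  perm_eq D D' -> apply_all w D k = apply_all w D' k.
Proof.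
move=> U P; have U' : uniq (positions D') by rewrite -(uniq_positions_perm P).
have [/hasP[o O K]|/hasPn N] := boolP (has (fun o => k \in modified o) D).
  by rewrite (apply_all_in _ U O K) (apply_all_in _ U' _ K) // -(perm_mem P).
by rewrite !apply_all_out // => o O; apply: N; rewrite (perm_mem P).
Qed.

Lemma disjoint_ops_rem (w : word) (D : seq op) (o : op) : disjoint_ops w D -> o \in D ->
  disjoint_ops (apply_op w o) (rem o D).
Proof.
move=> /andP[U V] O; have U1 : uniq (positions (o :: rem o D)).
  by rewrite -(uniq_positions_perm (perm_to_rem O)).
have Vw o' : o' \in D -> op_valid w o' by move/allP: V; apply.
apply/andP; split; first by move: U1; rewrite /positions /= cat_uniq => /and3P[].
apply/allP => o' O'; rewrite (op_valid_ext (w' := w)) ?size_apply_op ?Vw ?(mem_rem O') // => j J.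
by rewrite nth_apply_op ?Vw //; case: ifP => // J'; move: (disjoint_head U1 O' J'); rewrite J.
Qed.

Section FreeOrdering.

Variable f : word.

Hypothesis step_exists : forall (w v : word) (D : seq op),
  D != [::] -> disjoint_ops w D -> size v = size w ->
  (forall k, nth false v k = apply_all w D k) -> free f w -> free f v ->
  exists2 o, o \in D & free f (apply_op w o).

Lemma free_ordering (D : seq op) (w v : word) :
  disjoint_ops w D -> size v = size w ->
  (forall k, nth false v k = apply_all w D k) -> free f w -> free f v ->
  exists os, [/\ perm_eq os D, transforms w v os & all (free f) (trace w os)].
Proof.
move SD : (size D) => n; elim: n D w SD => [|n IH] D w SD DD Sv Hv Fw Fv.
  move/size0nil: SD => D0; subst D; exists [::]; split => //=; last by rewrite Fw.
  by split => //; apply: (@eq_from_nth _ false) => [|k _]; rewrite ?Hv ?Sv.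
have DN : D != [::] by case: (D) SD.
have [o O Fo] := step_exists DN DD Sv Hv Fw Fv.
have Vo : op_valid w o by case/andP: DD => _ /allP; apply.
have Hv' k : nth false v k = apply_all (apply_op w o) (rem o D) k.
  case/andP: DD => U _; rewrite Hv (apply_all_perm _ _ U (perm_to_rem O)).
  by rewrite apply_all_cons // -(uniq_positions_perm (perm_to_rem O)).
have Sv' : size v = size (apply_op w o) by rewrite size_apply_op.
have SD' : size (rem o D) = n by rewrite size_rem // SD.
have [os [Pos [Vos Eos] Fos]] := IH _ _ SD' (disjoint_ops_rem DD O) Sv' Hv' Fo Fv.
exists (o :: os); split; last by rewrite /= Fw.
- by rewrite perm_sym; apply: perm_trans (perm_to_rem O) _; rewrite perm_cons perm_sym.
- by split; rewrite /= ?Vo.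
Qed.

End FreeOrdering.

(* The greedy distance: scan both words from the left; a mismatch costs one
   operation, and it is repaired together with the next position by a swap
   whenever u reads ab and v reads ba there.  It is a lower bound for the
   length of every transformation (each operation lowers it by at most one),
   and it is attained by a disjoint family of operations. *)
Fixpoint greedy_dist (u v : word) : nat :=
  match u, v with
  | a :: u1, x :: v1 =>
    if a == x then greedy_dist u1 v1 else
    match u1, v1 with
    | b :: u2, y :: v2 =>
      if (a != b) && (b != y) then (greedy_dist u2 v2).+1 else (greedy_dist u1 v1).+1
    | _, _ => (greedy_dist u1 v1).+1
    end
  | _, _ => 0
  end.

Lemma greedy_dist_cons2 (a b x y : bool) (u v : word) :
  greedy_dist (a :: b :: u) (x :: y :: v) =
  if a == x then greedy_dist (b :: u) (y :: v) else
  if (a != b) && (b != y) then (greedy_dist u v).+1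
  else (greedy_dist (b :: u) (y :: v)).+1.
Proof. by []. Qed.

Lemma greedy_dist_nil_r (u : word) : greedy_dist u [::] = 0.
Proof. by case: u. Qed.

Lemma greedy_dist_single (a x : bool) (u : word) :
  greedy_dist (a :: u) [:: x] = (a != x).
Proof. by rewrite /=; case: ifP => //; case: u. Qed.

Lemma greedy_dist_refl (u : word) : greedy_dist u u = 0.
Proof. by elim: u => //= a u IH; rewrite eqxx. Qed.

Lemma greedy_dist_cons_bounds (n : nat) (u : word) : size u <= n ->
  (forall c z v, greedy_dist (c :: u) (z :: v) <= (greedy_dist u v).+1) /\
  (forall c z v, greedy_dist u v <= greedy_dist (c :: u) (z :: v)).
Proof.
elim: n u => [|n IH] [|b u] // Hs;
  try by split=> c z [|y v] //=; case: ifP.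
have [IH1 IH2] := IH u Hs.
split=> c z [|y v]; rewrite ?greedy_dist_nil_r ?greedy_dist_single; try by case: (c != z).
  by rewrite greedy_dist_cons2; case: ifP => _; [lia | case: ifP => _; have := IH2 b y v; lia].
by rewrite greedy_dist_cons2; have := IH1 b y v; case: ifP => _; [lia | case: ifP => _; lia].
Qed.

Lemma greedy_dist_cons_le (c z : bool) (u v : word) :
  greedy_dist (c :: u) (z :: v) <= (greedy_dist u v).+1.
Proof. by have [H _] := greedy_dist_cons_bounds (leqnn (size u)); apply: H. Qed.

Lemma greedy_dist_cons_ge (c z : bool) (u v : word) :
  greedy_dist u v <= greedy_dist (c :: u) (z :: v).
Proof. by have [_ H] := greedy_dist_cons_bounds (leqnn (size u)); apply: H. Qed.

Definition shift_op (o : op) : op :=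
  match o with R i => R i.+1 | S i => S i.+1 end.

Lemma apply_shift_op (a : bool) (u : word) (o : op) :
  apply_op (a :: u) (shift_op o) = a :: apply_op u o.
Proof. by case: o. Qed.

Lemma valid_shift_op (a : bool) (u : word) (o : op) :
  op_valid (a :: u) (shift_op o) = op_valid u o.
Proof. by case: o. Qed.

Lemma modified_shift_op (o : op) (k : nat) :
  (k.+1 \in modified (shift_op o)) = (k \in modified o).
Proof. by case: o => i; rewrite /= !inE. Qed.

Lemma modified0_shift_op (o : op) : (0 \in modified (shift_op o)) = false.
Proof. by case: o => i; rewrite /= !inE. Qed.

Lemma op_val_shift_op (a : bool) (u : word) (o : op) (k : nat) :
  op_val (a :: u) (shift_op o) k.+1 = op_val u o k.
Proof. by case: o. Qed.

Variant op_shape : op -> Type :=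
  | OpR0 : op_shape (R 0)
  | OpS0 : op_shape (S 0)
  | OpShift (o : op) : op_shape (shift_op o).

Lemma op_shapeP (o : op) : op_shape o.
Proof.
by case: o => [[|i]|[|i]];
  [exact: OpR0 | exact: (OpShift (R i)) | exact: OpS0 | exact: (OpShift (S i))].
Qed.

Section GreedyStep.

Variable n : nat.
Hypothesis step_IH : forall (u v : word) (o : op), size u <= n -> op_valid u o ->
  greedy_dist u v <= (greedy_dist (apply_op u o) v).+1.

Lemma greedy_dist_step_shifted (a x : bool) (u v : word) (o : op) :
  size (a :: u) <= n.+1 -> op_valid u o ->
  greedy_dist (a :: u) (x :: v) <= (greedy_dist (a :: apply_op u o) (x :: v)).+1.
Proof.
case: u => [|b u2] Hs Vo; first by case: o Vo.
case: v => [|y v2]; first by rewrite !greedy_dist_single; case: (a != x).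
case: (op_shapeP o) Vo => [_ | | o' Vo].
- rewrite (_ : apply_op (b :: u2) (R 0) = ~~ b :: u2) // !greedy_dist_cons2.
  have := greedy_dist_cons_le b y u2 v2; have := greedy_dist_cons_ge b y u2 v2.
  have := greedy_dist_cons_le (~~ b) y u2 v2; have := greedy_dist_cons_ge (~~ b) y u2 v2.
  by clear Hs; case: a; case: b; case: x; case: y => //=; lia.
- case: u2 Hs => [|c u3] Hs; first by case/andP.
  case/andP=> _ Hbc; rewrite (_ : apply_op [:: b, c & u3] (S 0) = [:: c, b & u3]) //.
  case: v2 => [|z v3].
    rewrite !greedy_dist_cons2 !greedy_dist_single; clear Hs.
    by move: Hbc; case: a; case: b; case: c; case: x; case: y.
  rewrite !greedy_dist_cons2.
  have := greedy_dist_cons_le c z u3 v3; have := greedy_dist_cons_ge c z u3 v3.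
  have := greedy_dist_cons_le b z u3 v3; have := greedy_dist_cons_ge b z u3 v3.
  by clear Hs; move: Hbc; case: a; case: b; case: c; case: x; case: y; case: z => //=; lia.
- rewrite valid_shift_op in Vo; rewrite apply_shift_op !greedy_dist_cons2.
  have Hs1 : size u2 <= n by move: Hs => /=; lia.
  have Hs2 : size (b :: u2) <= n by move: Hs => /=; lia.
  have := step_IH v2 Hs1 Vo.
  have := step_IH (y :: v2) Hs2 (o := shift_op o').
  rewrite valid_shift_op apply_shift_op => /(_ Vo).
  by case: (a == x) => /=; [lia | case: ((a != b) && (b != y)) => /=; lia].
Qed.

End GreedyStep.

Lemma greedy_dist_step (u v : word) (o : op) : op_valid u o ->
  greedy_dist u v <= (greedy_dist (apply_op u o) v).+1.
Proof.
move: {2}(size u) (leqnn (size u)) => n; elim: n u v o => [|n IH] [|a u] v o;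
  try by case: o => i.
move=> Hs; case: v => [|x v]; first by rewrite !greedy_dist_nil_r.
case: (op_shapeP o) => [_ | | o'].
- rewrite (_ : apply_op (a :: u) (R 0) = ~~ a :: u) //.
  have := greedy_dist_cons_le a x u v; have := greedy_dist_cons_ge (~~ a) x u v.
  by clear Hs; case: a; case: x => /=; rewrite ?eqxx //=; lia.
- case: u Hs => [|b u2] Hs; first by case/andP.
  case/andP=> _ Hab; rewrite (_ : apply_op [:: a, b & u2] (S 0) = [:: b, a & u2]) //.
  case: v => [|y v2]; first by rewrite !greedy_dist_single; case: (a != x).
  rewrite !greedy_dist_cons2.
  have := greedy_dist_cons_le b y u2 v2; have := greedy_dist_cons_ge b y u2 v2.
  have := greedy_dist_cons_le a y u2 v2; have := greedy_dist_cons_ge a y u2 v2.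
  by clear Hs; move: Hab; case: a; case: b; case: x; case: y => //=; lia.
- rewrite valid_shift_op apply_shift_op => Vo.
  exact: (greedy_dist_step_shifted (fun u v o Hu => IH u v o Hu) x v Hs Vo).
Qed.

Lemma greedy_dist_lower (u v : word) (os : seq op) :
  transforms u v os -> greedy_dist u v <= size os.
Proof.
elim: os u => [|o os IH] u [/= V E]; first by subst v; rewrite greedy_dist_refl.
case/andP: V => Vo V; have := IH _ (conj V E); have := greedy_dist_step v Vo.
by rewrite /=; lia.
Qed.

Fixpoint greedy_ops (u v : word) : seq op :=
  match u, v with
  | a :: u1, x :: v1 =>
    if a == x then map shift_op (greedy_ops u1 v1) else
    match u1, v1 with
    | b :: u2, y :: v2 =>
      if (a != b) && (b != y) then S 0 :: map shift_op (map shift_op (greedy_ops u2 v2))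
      else R 0 :: map shift_op (greedy_ops u1 v1)
    | _, _ => R 0 :: map shift_op (greedy_ops u1 v1)
    end
  | _, _ => [::]
  end.

Lemma apply_all_shift (a : bool) (u : word) (D : seq op) (k : nat) :
  apply_all (a :: u) (map shift_op D) k.+1 = apply_all u D k.
Proof. by elim: D => //= o D ->; rewrite modified_shift_op op_val_shift_op. Qed.

Lemma apply_all_shift0 (a : bool) (u : word) (D : seq op) :
  apply_all (a :: u) (map shift_op D) 0 = a.
Proof. by elim: D => //= o D ->; rewrite modified0_shift_op. Qed.

Lemma positions_shift (D : seq op) :
  positions (map shift_op D) = map succn (positions D).
Proof. by elim: D => //= o D IH; rewrite /positions /= map_cat -IH; case: o. Qed.

Lemma disjoint_ops_shift (a : bool) (u : word) (D : seq op) :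
  disjoint_ops (a :: u) (map shift_op D) = disjoint_ops u D.
Proof.
rewrite /disjoint_ops positions_shift (map_inj_uniq succn_inj); congr andb.
by elim: D => //= o D ->; rewrite valid_shift_op.
Qed.

Lemma disjoint_ops_R0 (a : bool) (u : word) (D : seq op) :
  disjoint_ops u D -> disjoint_ops (a :: u) (R 0 :: map shift_op D).
Proof.
rewrite -(disjoint_ops_shift a) => /andP[U V].
rewrite /disjoint_ops /positions /= -/(positions _) U V positions_shift !andbT.
by apply/mapP => -[j].
Qed.

Lemma disjoint_ops_S0 (a b : bool) (u : word) (D : seq op) : a != b ->
  disjoint_ops u D -> disjoint_ops (a :: b :: u) (S 0 :: map shift_op (map shift_op D)).
Proof.
move=> Hab; rewrite -(disjoint_ops_shift b) -(disjoint_ops_shift a) => /andP[U V].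
rewrite /disjoint_ops /positions /= -/(positions _) U V Hab !positions_shift !inE /= !andbT.
by apply/andP; split; apply/mapP => -[j /mapP[i _ ->]].
Qed.

Lemma greedy_ops_spec (u v : word) : size u = size v ->
  [/\ size (greedy_ops u v) = greedy_dist u v, disjoint_ops u (greedy_ops u v)
    & forall k, apply_all u (greedy_ops u v) k = nth false v k].
Proof.
move: {2}(size u) (leqnn (size u)) => n; elim: n u v => [|n IH] [|a u1] [|x v1] //= Hs Es;
  try by split => // k; rewrite nth_nil.
have [S1 D1 K1] := IH u1 v1 (ltac:(lia)) (ltac:(lia)).
case: eqP => [<-|Nax].
  split; rewrite ?size_map ?disjoint_ops_shift //.
  by case=> [|k]; rewrite ?apply_all_shift0 ?apply_all_shift.
have Rcase : [/\ (size (map shift_op (greedy_ops u1 v1))).+1 = (greedy_dist u1 v1).+1,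
    disjoint_ops (a :: u1) (R 0 :: map shift_op (greedy_ops u1 v1))
  & forall k, apply_all (a :: u1) (R 0 :: map shift_op (greedy_ops u1 v1)) k
              = nth false (x :: v1) k].
  split; rewrite ?size_map ?S1 ?disjoint_ops_R0 //.
  by case=> [|k] /=; [move: Nax; case: a; case: x | rewrite apply_all_shift].
case: u1 v1 Hs Es S1 D1 K1 Rcase => [|b u2] [|y v2] //= Hs Es _ _ _ Rcase.
case: ifP => // /andP[Nab Nby]; clear Rcase.
have [S2 D2 K2] := IH u2 v2 (ltac:(lia)) (ltac:(lia)).
split; [by rewrite /= !size_map S2 | exact: disjoint_ops_S0 |].
case=> [|[|k]] /=; rewrite ?apply_all_shift ?K2 //.
all: by move: Nax Nab Nby; case: a; case: b; case: x; case: y.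
Qed.

Definition factor (y : word) (b l : nat) : word := take l (drop b y).

Lemma size_factor (y : word) (b l : nat) : b + l <= size y -> size (factor y b l) = l.
Proof. by move=> H; rewrite /factor size_takel ?size_drop //; lia. Qed.

Lemma nth_factor (y : word) (b l k : nat) : k < l ->
  nth false (factor y b l) k = nth false y (b + k).
Proof. by move=> H; rewrite /factor nth_take // nth_drop. Qed.

Lemma transforms_cat (p q r : word) (os1 os2 : seq op) :
  transforms p q os1 -> transforms q r os2 -> transforms p r (os1 ++ os2).
Proof.
elim: os1 p => [|o os1 IH] p [/= V E] T2; first by subst q.
case/andP: V => Vo V; have [V' E'] := IH _ (conj V E) T2.
by split; rewrite /= ?Vo.
Qed.

Lemma transforms_single (u : word) (o : op) :
  op_valid u o -> transforms u (apply_op u o) [:: o].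
Proof. by move=> Vo; split; rewrite //= Vo. Qed.

Lemma transform_one_mismatch (p s : word) (j : nat) : size p = size s ->
  (forall k, k < size p -> k != j -> nth false p k = nth false s k) ->
  exists os, size os <= 1 /\ transforms p s os.
Proof.
move=> Es H.
have [Lj|Lj] := ltnP j (size p); last first.
  exists [::]; split => //; split => //=; apply: (@eq_from_nth _ false) => // k K.
  by apply: H => //; apply/eqP; lia.
have [/eqP Ej|Nj] := boolP (nth false p j == nth false s j).
  exists [::]; split => //; split => //=; apply: (@eq_from_nth _ false) => // k K.
  by case: (k =P j) => [->//|/eqP N]; apply: H.
exists [:: R j]; split => //; split => /=; first by rewrite Lj.
apply: (@eq_from_nth _ false) => [|k K]; first by rewrite size_set_nth -Es; lia.
rewrite nth_set_nth /=; case: (k =P j) => [->|/eqP N].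
  by move: Nj; case: (nth false p j); case: (nth false s j).
by apply: H => //; move: K; rewrite size_set_nth; lia.
Qed.

Lemma factor_swap (y : word) (i b l : nat) : b <= i -> i.+1 < b + l ->
  b + l <= size y -> op_valid y (S i) ->
  op_valid (factor y b l) (S (i - b)) /\
  apply_op (factor y b l) (S (i - b)) = factor (apply_op y (S i)) b l.
Proof.
move=> Hb Hi L V; have /andP[_ Hne] := V.
have Ei : b + (i - b) = i by lia.
have Vs : op_valid (factor y b l) (S (i - b)).
  by rewrite /= size_factor // !nth_factor ?addnS ?Ei; lia.
split => //; apply: (@eq_from_nth _ false) => [|k].
  by rewrite (size_apply_op Vs) !size_factor ?size_apply_op.
rewrite size_apply_op // size_factor // => K.
rewrite (nth_apply_op _ Vs) [RHS]nth_factor // nth_apply_op // !inE /= !nth_factor; try lia.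
have -> : (b + k == i) = (k == i - b) by apply/eqP/eqP; lia.
have -> : (b + k == i.+1) = (k == (i - b).+1) by apply/eqP/eqP; lia.
by rewrite addnS Ei.
Qed.

(* One operation changes a factor by at most one operation: a swap inside the
   window is translated, otherwise at most one position of the window changes. *)
Lemma factor_apply_op (y : word) (o : op) (b l : nat) :
  op_valid y o -> b + l <= size y ->
  exists os, size os <= 1 /\ transforms (factor y b l) (factor (apply_op y o) b l) os.
Proof.
move=> Vo L; have L' : b + l <= size (apply_op y o) by rewrite size_apply_op.
case: o Vo L' => i Vo L'.
  apply: (transform_one_mismatch (j := i - b)); rewrite ?size_factor // => k K Nk.
  by rewrite !nth_factor // nth_apply_op // inE; case: eqP => // E; move: Nk; lia.
have [/andP[Hb Hi]|Hout] := boolP ((b <= i) && (i.+1 < b + l)).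
  have [Vs Es] := factor_swap Hb Hi L Vo.
  by exists [:: S (i - b)]; rewrite -Es; split; last exact: transforms_single.
apply: (transform_one_mismatch (j := if i < b then i.+1 - b else i - b)).
  by rewrite !size_factor.
move=> k; rewrite size_factor // => K Nk; rewrite !nth_factor // nth_apply_op // !inE.
by case: eqP => [E|_]; [|case: eqP => // E]; move: Nk Hout; case: ifP; lia.
Qed.

Lemma factor_transforms (y x : word) (os : seq op) (b l : nat) :
  transforms y x os -> b + l <= size y ->
  exists os', size os' <= size os /\ transforms (factor y b l) (factor x b l) os'.
Proof.
elim: os y => [|o os IH] y [/= V E] L; first by subst x; exists [::].
case/andP: V => Vo V.
have [os1 [S1 T1]] := factor_apply_op Vo L.
have [os2 [S2 T2]] := IH _ (conj V E) (ltac:(by rewrite size_apply_op)).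
by exists (os1 ++ os2); split; [rewrite size_cat /=; lia | exact: transforms_cat T1 T2].
Qed.

Lemma two_mismatch_distance (p s : word) (j1 j2 : nat) : j1 != j2 ->
  nth false p j1 != nth false s j1 -> nth false p j2 != nth false s j2 ->
  (exists os, size os <= 2 /\ transforms p s os) ->
  dist_tilde p s 2 \/
  (dist_tilde p s 1 /\ exists i, op_valid p (S i) /\ s = apply_op p (S i)).
Proof.
move=> N12 D1 D2 [os [Sz T]].
have no_empty os' : transforms p s os' -> size os' <> 0.
  by case: os' => [[_ /= E]|//]; move: D1; rewrite E eqxx.
have no_replacement i : ~ transforms p s [:: R i].
  move=> [_ /= E]; move: D1 D2 N12; rewrite -E !nth_set_nth /=.
  by case: (j1 =P i) => [->|_]; case: (j2 =P i) => [->|_]; rewrite ?eqxx.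
have [[i Ti]|no_swap] := classic (exists i, transforms p s [:: S i]).
  right; split; first by split=> [|os' /no_empty]; [exists [:: S i] | case: (size os')].
  by exists i; case: Ti => /= /andP[V _] E.
have no_single os' : transforms p s os' -> size os' <> 1.
  case: os' => [|[] i [|//]] // Tos _; [exact: no_replacement Tos | by apply: no_swap; exists i].
left; split.
  by exists os; split => //; have := no_empty _ T; have := no_single _ T; lia.
by move=> os' T'; have := no_empty _ T'; have := no_single _ T'; lia.
Qed.

Definition occurs_at (f x : word) (a : nat) : Prop :=
  a + size f <= size x /\
  forall k, k < size f -> nth false x (a + k) = nth false f k.

Lemma infix_occurs (f x : word) : infix f x -> exists a, occurs_at f x a.
Proof.
move/infixP => [s [s' ->]]; exists (size s).
split=> [|k K]; first by rewrite !size_cat leq_add2l leq_addr.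
by rewrite nth_cat ltnNge leq_addr /= addKn nth_cat K.
Qed.

Lemma occurs_infix (f x : word) (a : nat) : occurs_at f x a -> infix f x.
Proof.
move=> [L H]; apply/infixP; exists (take a x), (drop (size f) (drop a x)).
have -> : f = take (size f) (drop a x).
  apply: (@eq_from_nth _ false) => [|k K]; first by rewrite size_takel // size_drop; lia.
  by rewrite nth_take // nth_drop H.
by rewrite size_takel ?size_drop; [rewrite !cat_take_drop | lia].
Qed.

Lemma pre_occurs (f x : word) (b l : nat) : occurs_at f x b -> l <= size f ->
  pre l f = factor x b l.
Proof.
move=> [Lb W] Hl; apply: (@eq_from_nth _ false) => [|k].
  by rewrite size_factor ?size_takel //; lia.
by rewrite size_takel // => K; rewrite nth_take // nth_factor // W //; lia.
Qed.

Lemma suf_occurs (f x : word) (a b l : nat) : occurs_at f x a -> a <= b ->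
  b + l = a + size f -> suf l f = factor x b l.
Proof.
move=> [La W] Hab E; apply: (@eq_from_nth _ false) => [|k].
  by rewrite size_factor ?size_drop; lia.
rewrite size_drop => K; rewrite nth_drop nth_factor; last by lia.
by rewrite -W; [congr nth|]; lia.
Qed.

Definition hits (f : word) (a : nat) (o : op) : Prop :=
  exists2 k, k \in modified o & a <= k < a + size f.

Lemma occurrence_hits (f w : word) (o : op) (a : nat) : free f w -> op_valid w o ->
  occurs_at f (apply_op w o) a -> hits f a o.
Proof.
move=> Fw Vo [L W]; apply: NNPP => NH; move/negP: Fw; apply; apply: (@occurs_infix _ _ a).
split=> [|k K]; first by rewrite size_apply_op in L.
rewrite -W // nth_apply_op //; case: ifP => // Hk; case: NH.
by exists (a + k) => //; lia.
Qed.

Lemma hits_overlap (f : word) (o : op) (a b : nat) : hits f a o -> hits f b o ->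
  a <= b -> b < a + size f -> exists2 j, j \in modified o & b <= j < a + size f.
Proof.
move=> [k1 K1 B1] [k2 K2 B2] Hab Hb.
have := modified_bounds K1; have := modified_bounds K2.
by case: (ltnP k1 b) => Hk1 *; [exists k2 | exists k1] => //; lia.
Qed.

Lemma hits_far (f : word) (o : op) (a b : nat) : hits f a o -> hits f b o ->
  a + size f <= b -> (a + size f).-1 \in modified o.
Proof.
move=> [k1 K1 B1] [k2 K2 B2] Hb.
have := modified_bounds K1; have := modified_bounds K2 => *.
by rewrite (_ : (a + size f).-1 = k1) //; lia.
Qed.

(* The
   common part of the two windows is then a prefix of f (read in w o2) and a
   suffix of f (read in w o1); these differ where o1 and o2 act, and are
   related by the restriction of the transformation w o2 -> w -> w o1. *)
Lemma overlap_of_occurrences (f w : word) (o1 o2 : op) (a b : nat) :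
  op_valid w o1 -> op_valid w o2 ->
  (forall k, k \in modified o1 -> k \notin modified o2) -> a < b ->
  occurs_at f (apply_op w o1) a -> occurs_at f (apply_op w o2) b ->
  hits f a o1 -> hits f a o2 -> hits f b o1 -> hits f b o2 ->
  (exists l, overlap_typeS f l) \/ (exists l, err_overlap f 2 l).
Proof.
move=> V1 V2 Dj Hab Occ1 Occ2 H1a H2a H1b H2b.
have Hbn : b < a + size f.
  rewrite ltnNge; apply/negP => Hfar.
  by move: (Dj _ (hits_far H1a H1b Hfar)); rewrite (hits_far H2a H2b Hfar).
have [j1 J1 B1] := hits_overlap H1a H1b (ltnW Hab) Hbn.
have [j2 J2 B2] := hits_overlap H2a H2b (ltnW Hab) Hbn.
have NJ2 : j2 \notin modified o1 by apply/negP => /Dj; rewrite J2.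
set l := a + size f - b.
have Hl : 1 <= l <= (size f).-1 by rewrite /l; lia.
have HP : pre l f = factor (apply_op w o2) b l by apply: pre_occurs Occ2 _; rewrite /l; lia.
have HS : suf l f = factor (apply_op w o1) b l by apply: suf_occurs Occ1 _ _; rewrite /l; lia.
have T : transforms (apply_op w o2) (apply_op w o1) [:: o2; o1].
  apply: (@transforms_cat _ w _ [:: o2] [:: o1]); last exact: transforms_single.
  by have := transforms_single (op_valid_apply_self V2); rewrite apply_op_involutive.
have Lb : b + l <= size (apply_op w o2) by case: Occ2 => L _; rewrite /l; lia.
have [os [Sz T']] := factor_transforms T Lb.
have mismatch (oa ob : op) j : op_valid w oa -> op_valid w ob -> j \in modified oa ->
    j \notin modified ob -> b <= j < b + l ->
    nth false (factor (apply_op w ob) b l) (j - b)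
    != nth false (factor (apply_op w oa) b l) (j - b).
  move=> Va Vb Ja Jb Bj; rewrite !nth_factor ?subnKC ?nth_apply_op //; try lia.
  by rewrite Ja (negbTE Jb) eq_sym op_val_flips.
have M1 := mismatch _ _ j1 V1 V2 J1 (Dj _ J1) (ltac:(rewrite /l; lia)).
have M2 := mismatch _ _ j2 V2 V1 J2 NJ2 (ltac:(rewrite /l; lia)); rewrite eq_sym in M2.
have N12 : j1 - b != j2 - b by apply/eqP => E; move: NJ2; rewrite (_ : j2 = j1) ?J1 //; lia.
case: (two_mismatch_distance N12 M1 M2 (ex_intro _ os (conj Sz T'))); rewrite -HP -HS.
  by right; exists l.
by case=> Dist1 [i Si]; left; exists l; split => //; exists i.
Qed.

Lemma classical_min (P : nat -> Prop) (n : nat) :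
  P n -> exists m, P m /\ forall k, P k -> m <= k.
Proof.
move=> Pn; apply: NNPP => Hno.
suff no_P k j : j < k -> ~ P j by exact: (no_P n.+1 n (ltnSn n)).
elim: k j => [//|k IH] j Hj Pj; apply: Hno; exists j; split => // i Pi.
by rewrite leqNgt; apply/negP => Hij; apply: (IH i) => //; lia.
Qed.

Section SwitchingPair.

Variables (T : eqType) (key : T -> nat) (s : seq T) (Lo Hi : T -> Prop).
Hypothesis s_nonempty : s != [::].
Hypothesis lo_or_hi : forall x, x \in s -> Lo x \/ Hi x.
Hypothesis lo_below : forall x, x \in s -> Lo x -> exists2 y, y \in s & key y < key x.
Hypothesis hi_above : forall x, x \in s -> Hi x -> exists2 y, y \in s & key x < key y.

Lemma exists_max_key (P : pred T) : has P s ->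
  exists2 x, (x \in s) && P x & forall z, z \in s -> P z -> key z <= key x.
Proof.
move=> HP; pose Q n := has (fun z => P z && (key z == n)) s.
have exQ : exists n, Q n.
  by case/hasP: HP => z Z Pz; exists (key z); apply/hasP; exists z; rewrite ?Pz ?eqxx.
have ubQ n : Q n -> n <= \max_(z <- s | P z) key z.
  by case/hasP => z Z /andP[Pz /eqP <-]; exact: leq_bigmax_seq.
case: (ex_maxnP exQ ubQ) => m /hasP[x X /andP[Px /eqP Ex]] Hm.
exists x; first by rewrite X.
by move=> z Z Pz; rewrite Ex; apply: Hm; apply/hasP; exists z; rewrite ?Pz ?eqxx.
Qed.

Lemma switching_pair : exists y x, [/\ y \in s, x \in s, key y < key x, Hi y & Lo x] /\
  forall z, z \in s -> ~~ (key y < key z < key x).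
Proof.
have ex_top : has predT s by case: s s_nonempty.
have [top /andP[Top _] Mtop] := exists_max_key ex_top.
have Lotop : Lo top.
  case: (lo_or_hi Top) => // /(hi_above Top) [z Z]; have := Mtop z Z isT; lia.
pose P n := exists2 x, x \in s & key x = n /\ Lo x.
have [m [[x X [Kx Lox]] Mm]] := classical_min (P := P) (ex_intro2 _ _ top Top (conj erefl Lotop)).
have [y0 Y0 Hy0] := lo_below X Lox.
have [y /andP[Y Hyx] My] := exists_max_key (P := fun z => key z < key x)
  (introT hasP (ex_intro2 _ _ y0 Y0 Hy0)).
exists y, x; split; first split => //.
- case: (lo_or_hi Y) => // Loy; have := Mm (key y) (ex_intro2 _ _ y Y (conj erefl Loy)); lia.
- by move=> z Z; apply/negP => /andP[Hyz Hzx]; have := My z Z Hzx; lia.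
Qed.

End SwitchingPair.

(* Occurrences of f at the same place in w o1 and w o2, for disjoint o1, o2,
   cannot both be hit by o1: o1 makes them differ there. *)
Lemma occurrences_same_place (f w : word) (o1 o2 : op) (a : nat) :
  op_valid w o1 -> op_valid w o2 -> (forall k, k \in modified o1 -> k \notin modified o2) ->
  occurs_at f (apply_op w o1) a -> occurs_at f (apply_op w o2) a -> ~ hits f a o1.
Proof.
move=> V1 V2 Dj [_ W1] [_ W2] [k K /andP[Ha Hk]].
have E1 : nth false (apply_op w o1) k = nth false f (k - a) by rewrite -W1 ?subnKC //; lia.
have E2 : nth false (apply_op w o2) k = nth false f (k - a) by rewrite -W2 ?subnKC //; lia.
move: (op_val_flips V1 K).
have -> : op_val w o1 k = nth false (apply_op w o1) k by rewrite nth_apply_op // K.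
have -> : nth false w k = nth false (apply_op w o2) k by rewrite nth_apply_op // (negbTE (Dj _ K)).
by rewrite E1 E2 eqxx.
Qed.

Section FreeStep.

Variables (f w v : word) (D : seq op).
Hypothesis uniqD : uniq (positions D).
Hypothesis validD : all (op_valid w) D.
Hypothesis size_v : size v = size w.
Hypothesis apply_v : forall k, nth false v k = apply_all w D k.
Hypothesis free_v : free f v.

Lemma valid_in (o : op) : o \in D -> op_valid w o.
Proof. by move/allP: validD; apply. Qed.

Lemma modified_apart (o o' : op) : o \in D -> o' \in D -> o != o' ->
  forall k, k \in modified o -> k \notin modified o'.
Proof.
by move=> O O' N k K; apply/negP => K'; move: N; rewrite (modified_disjoint uniqD O O' K K') eqxx.
Qed.

(* An occurrence of f in w o must also be hit by another operation of D,
   otherwise it would survive in v. *)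
Lemma occurrence_hits_other (o : op) (a : nat) : o \in D ->
  occurs_at f (apply_op w o) a -> exists2 o', o' \in D & o' != o /\ hits f a o'.
Proof.
move=> O [L W]; apply: NNPP => NH; move/negP: free_v; apply; apply: (@occurs_infix _ _ a).
split=> [|k K]; first by rewrite size_v -(size_apply_op (valid_in O)).
rewrite -W // apply_v nth_apply_op ?valid_in //; case: ifP => KM; first exact: apply_all_in.
rewrite apply_all_out // => o' O'; apply/negP => KM'.
case: (o' =P o) => [E|/eqP N]; first by move: KM; rewrite -E KM'.
by apply: NH; exists o' => //; split => //; exists (a + k) => //; lia.
Qed.

Lemma hits_between (a : nat) (o1 o2 o3 : op) : o1 \in D -> o2 \in D -> o3 \in D ->
  hits f a o1 -> hits f a o2 -> op_pos o1 <= op_pos o3 <= op_pos o2 -> hits f a o3.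
Proof.
move=> O1 O2 O3 H1 H2 /andP[L1 L2].
case: (ltngtP (op_pos o1) (op_pos o3)) L1 => // [Lt1|E1] _;
  last by rewrite -(op_pos_inj uniqD O1 O3 E1).
case: (ltngtP (op_pos o3) (op_pos o2)) L2 => // [Lt2|E2] _;
  last by rewrite (op_pos_inj uniqD O3 O2 E2).
case: H1 H2 => [k1 K1 B1] [k2 K2 B2]; exists (op_pos o3); first exact: op_pos_modified.
have Nk1 : k1 <> op_pos o3.
  by move=> E; move: Lt1; rewrite (modified_disjoint uniqD O1 O3 K1) ?ltnn // E op_pos_modified.
by have := modified_bounds K1; have := modified_bounds K2; lia.
Qed.

(* Otherwise every w o contains f, in a window hit by o and by another
   operation of D, lying to its left (Lo) or to its right (Hi); a switching
   pair p < r of neighbours in D then yields two windows hit by both p and r,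
   from which overlap_of_occurrences extracts a forbidden overlap. *)
Lemma free_step (free_w : free f w) :
  ~ (exists l, overlap_typeS f l) -> ~ (exists l, err_overlap f 2 l) ->
  D != [::] -> exists2 o, o \in D & free f (apply_op w o).
Proof.
move=> noS no2 DN; apply: NNPP => Hno.
have occ o : o \in D -> exists a, occurs_at f (apply_op w o) a.
  by move=> O; apply: infix_occurs; apply/negPn/negP => F; apply: Hno; exists o.
pose Lo o := exists a o', [/\ occurs_at f (apply_op w o) a, o' \in D, hits f a o'
  & op_pos o' < op_pos o].
pose Hi o := exists a o', [/\ occurs_at f (apply_op w o) a, o' \in D, hits f a o'
  & op_pos o < op_pos o'].
have lo_or_hi o : o \in D -> Lo o \/ Hi o.
  move=> O; have [a Occ] := occ o O; have [o' O' [N' H']] := occurrence_hits_other O Occ.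
  case: (ltngtP (op_pos o') (op_pos o)) => [Lt|Gt|E]; first (by left; exists a, o');
    first (by right; exists a, o').
  by move: N'; rewrite (op_pos_inj uniqD O' O E) eqxx.
have lo_below o : o \in D -> Lo o -> exists2 o', o' \in D & op_pos o' < op_pos o.
  by move=> _ [a [o' [_ O' _ L]]]; exists o'.
have hi_above o : o \in D -> Hi o -> exists2 o', o' \in D & op_pos o < op_pos o'.
  by move=> _ [a [o' [_ O' _ L]]]; exists o'.
have [p [r [[P R Lpr Hip Lor] Adj]]] := switching_pair DN lo_or_hi lo_below hi_above.
have [a [o2 [Occr O2 H2a L2]]] := Lor.
have [b [o3 [Occp O3 H3b L3]]] := Hip.
have Vp := valid_in P; have Vr := valid_in R.
have Hra := occurrence_hits free_w Vr Occr.
have Hpb := occurrence_hits free_w Vp Occp.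
have Hpa : hits f a p.
  by apply: (hits_between O2 R P H2a Hra); have := Adj o2 O2; move: Lpr L2; lia.
have Hrb : hits f b r.
  by apply: (hits_between P O3 R Hpb H3b); have := Adj o3 O3; move: Lpr L3; lia.
have Npr : p != r by apply/eqP => E; move: Lpr; rewrite E ltnn.
have Nrp : r != p by rewrite eq_sym.
case: (ltngtP a b) => [Lab|Lba|Eab].
- by case: (overlap_of_occurrences Vr Vp (modified_apart R P Nrp) Lab Occr Occp
    Hra Hpa Hrb Hpb) => [/noS|/no2].
- by case: (overlap_of_occurrences Vp Vr (modified_apart P R Npr) Lba Occp Occr
    Hpb Hrb Hpa Hra) => [/noS|/no2].
- by subst b; apply: (occurrences_same_place Vp Vr (modified_apart P R Npr) Occp Occr).
Qed.

End FreeStep.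

Theorem proposition3 (f : seq bool) :
  ~ tilde_isometric f ->
  (exists l, overlap_typeS f l) \/ (exists l, err_overlap f 2 l).
Proof.
move=> non_iso; apply: NNPP => no_overlap; apply: non_iso => m _ u v Su Sv Fu Fv.
have noS : ~ exists l, overlap_typeS f l by move=> H; apply: no_overlap; left.
have no2 : ~ exists l, err_overlap f 2 l by move=> H; apply: no_overlap; right.
have Euv : size u = size v by rewrite Su Sv.
have [size_greedy disj_greedy apply_greedy] := greedy_ops_spec Euv.
have step (w x : word) (D : seq op) : D != [::] -> disjoint_ops w D -> size x = size w ->
    (forall k, nth false x k = apply_all w D k) -> free f w -> free f x ->
    exists2 o, o \in D & free f (apply_op w o).
  by move=> DN /andP[U V] Sx Hx Fw Fx; exact: free_step U V Sx Hx Fx Fw noS no2 DN.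
have [os [Pos Tos Fos]] :=
  free_ordering step disj_greedy (esym Euv) (fun k => esym (apply_greedy k)) Fu Fv.
exists os; do 3 split=> //.
- split=> [|os' T']; first by exists os.
  by rewrite (perm_size Pos) size_greedy; apply: greedy_dist_lower.
- by case/andP: disj_greedy; rewrite (uniq_positions_perm Pos).
Qed.
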